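(* Identify $\operatorname{Pic}(\mathcal{X}_n)$ with the standard $D_5^{(1)}$ Picard lattice via the preliminary basis change $\mathcal{H}_f=2\mathcal{H}_x+\mathcal{H}_y-\mathcal{F}_{1356}$, $\mathcal{H}_g=\mathcal{H}_x$, $\mathcal{E}_1=\mathcal{H}_x-\mathcal{F}_1$, $\mathcal{E}_2=\mathcal{F}_2$, $\mathcal{E}_3=\mathcal{H}_x-\mathcal{F}_3$, $\mathcal{E}_4=\mathcal{F}_4$, $\mathcal{E}_5=\mathcal{H}_x-\mathcal{F}_6$, $\mathcal{E}_6=\mathcal{H}_x-\mathcal{F}_5$, $\mathcal{E}_7=\mathcal{F}_7$, $\mathcal{E}_8=\mathcal{F}_8$. Under this identification the standard surface roots $\delta_i$ coincide with the surface roots of $\mathcal{X}_n$, the standard symmetry roots become $\alpha_0=\mathcal{F}_1-\mathcal{F}_2$, $\alpha_1=\mathcal{H}_y-\mathcal{F}_{13}$, $\alpha_2=\mathcal{F}_3-\mathcal{F}_4$, $\alpha_3=2\mathcal{H}_x+\mathcal{H}_y-\mathcal{F}_{135678}$, and the map $\varphi_*$ acts on them as the translation $$(\alpha_0,\alpha_1,\alpha_2,\alpha_3)\mapsto(\alpha_0,\alpha_1-\delta,\alpha_2,\alpha_3+\delta),\qquad \delta=-\mathcal{K}_{\mathcal{X}}.$$ Moreover, on the Picard lattice, $\varphi_*=\sigma_3\sigma_2w_1w_2w_0w_1$, hence $\varphi_*=w_1\circ\phi_*\circ w_1$ where $\phi_*=\sigma_3\sigma_2w_3w_1w_2w_0$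 is the standard translation $(\alpha_0,\alpha_1,\alpha_2,\alpha_3)\mapsto(\alpha_0-\delta,\alpha_1+\delta,\alpha_2-\delta,\alpha_3+\delta)$.
   Context: Standard $D_5^{(1)}$ Picard lattice: generators $\mathcal{H}_f,\mathcal{H}_g,\mathcal{E}_1,\dots,\mathcal{E}_8$ with $\mathcal{H}_f\cdot\mathcal{H}_g=1$, $\mathcal{H}_f^2=\mathcal{H}_g^2=0$, $\mathcal{H}\cdot\mathcal{E}_i=0$, $\mathcal{E}_i\cdot\mathcal{E}_j=-\delta_{ij}$. Standard surface roots: $\delta_0=\mathcal{E}_1-\mathcal{E}_2$, $\delta_1=\mathcal{E}_3-\mathcal{E}_4$, $\delta_2=\mathcal{H}_f-\mathcal{E}_1-\mathcal{E}_3$, $\delta_3=\mathcal{H}_g-\mathcal{E}_5-\mathcal{E}_7$, $\delta_4=\mathcal{E}_5-\mathcal{E}_6$, $\delta_5=\mathcal{E}_7-\mathcal{E}_8$. Standard symmetry roots ($A_3^{(1)}$, cyclic diagram $\alpha_0-\alpha_1-\alpha_2-\alpha_3-\alpha_0$): $\alpha_0=\mathcal{H}_g-\mathcal{E}_1-\mathcal{E}_2$, $\alpha_1=\mathcal{H}_f-\mathcal{E}_5-\mathcal{E}_6$, $\alpha_2=\mathcal{H}_g-\mathcal{E}_3-\mathcal{E}_4$, $\alpha_3=\mathcal{H}_f-\mathcal{E}_7-\mathcal{E}_8$; $\delta=\alpha_0+\alpha_1+\alpha_2+\alpha_3=2\mathcal{H}_f+2\mathcal{H}_g-\sum\mathcal{E}_i$.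 Reflections $w_j(\mathcal{C})=\mathcal{C}+(\mathcal{C}\cdot\alpha_j)\alpha_j$, and for a root $r$ write $w_r(\mathcal{C})=\mathcal{C}+(\mathcal{C}\cdot r)r$; $\sigma_2=w_{\mathcal{E}_1-\mathcal{E}_3}\circ w_{\mathcal{E}_2-\mathcal{E}_4}$, $\sigma_3=w_{\mathcal{E}_5-\mathcal{E}_7}\circ w_{\mathcal{E}_6-\mathcal{E}_8}$. $\mathcal{X}_n$, its Picard lattice ($\mathcal{H}_x,\mathcal{H}_y,\mathcal{F}_1,\dots,\mathcal{F}_8$), its surface roots $\delta_0=\mathcal{H}_x-\mathcal{F}_1-\mathcal{F}_2$, $\delta_1=\mathcal{H}_x-\mathcal{F}_3-\mathcal{F}_4$, $\delta_2=\mathcal{H}_y-\mathcal{F}_5-\mathcal{F}_6$, $\delta_3=\mathcal{F}_6-\mathcal{F}_7$, $\delta_4=\mathcal{F}_5-\mathcal{F}_6$, $\delta_5=\mathcal{F}_7-\mathcal{F}_8$, and $\varphi_*$ are as follows: $\mathcal{X}_n$ is $\mathbb{P}^1\times\mathbb{P}^1$ blown up at $q_1(x=0,y=n)$, $q_2(x=0,y=n+\beta)$, $q_3(1/x=0,y=0)$, $q_4(1/x=0,y=-\alpha)$ and a cascade $q_5\leftarrow q_6\leftarrow q_7\leftarrow q_8$ over $(x=1/s,y=\infty)$; $\varphi_*$ is the pushforward of the forward map of the recurrence $x_nx_{n+1}=\frac{y_n^2-(2n+\beta)y_n+n(n+\beta)}{s^2(y_n^2+\alpha y_n)}$, $y_n+y_{n-1}=-\frac{\alpha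 s^2x_n^2+s(2n-1-\alpha+\beta+s)x_n-2n-\beta+1}{(1-sx_n)^2}$, given by $\mathcal{H}_x\mapsto5\mathcal{H}_x+2\mathcal{H}_y-\mathcal{F}_{1234}-2\mathcal{F}_{5678}$, $\mathcal{H}_y\mapsto2\mathcal{H}_x+\mathcal{H}_y-\mathcal{F}_{5678}$, $\mathcal{F}_1\mapsto2\mathcal{H}_x+\mathcal{H}_y-\mathcal{F}_{25678}$, $\mathcal{F}_2\mapsto2\mathcal{H}_x+\mathcal{H}_y-\mathcal{F}_{15678}$, $\mathcal{F}_3\mapsto2\mathcal{H}_x+\mathcal{H}_y-\mathcal{F}_{45678}$, $\mathcal{F}_4\mapsto2\mathcal{H}_x+\mathcal{H}_y-\mathcal{F}_{35678}$, $\mathcal{F}_5\mapsto\mathcal{H}_x-\mathcal{F}_8$, $\mathcal{F}_6\mapsto\mathcal{H}_x-\mathcal{F}_7$, $\mathcal{F}_7\mapsto\mathcal{H}_x-\mathcal{F}_6$, $\mathcal{F}_8\mapsto\mathcal{H}_x-\mathcal{F}_5$ (image classes on $\mathcal{X}_{n+1}$). Notation $\mathcal{F}_{i\cdots j}$ = sum of the listed $\mathcal{F}$'s. *)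

From Stdlib Require Import ZArith.
Open Scope Z_scope.

(* An element of a rank-10 Picard lattice, written in a fixed basis
   (B0, B1, B2, ..., B9).  For Pic(X_n) the basis is
   (H_x, H_y, F_1, ..., F_8); for the standard D_5^(1) lattice it is
   (H_f, H_g, E_1, ..., E_8). *)
Record V := mkV { c0 : Z; c1 : Z; c2 : Z; c3 : Z; c4 : Z;
                  c5 : Z; c6 : Z; c7 : Z; c8 : Z; c9 : Z }.

Definition vzero : V := mkV 0 0 0 0 0 0 0 0 0 0.
Definition vadd (u v : V) : V :=
  mkV (c0 u + c0 v) (c1 u + c1 v) (c2 u + c2 v) (c3 u + c3 v) (c4 u + c4 v)
      (c5 u + c5 v) (c6 u + c6 v) (c7 u + c7 v) (c8 u + c8 v) (c9 u + c9 v).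
Definition vscale (a : Z) (v : V) : V :=
  mkV (a * c0 v) (a * c1 v) (a * c2 v) (a * c3 v) (a * c4 v)
      (a * c5 v) (a * c6 v) (a * c7 v) (a * c8 v) (a * c9 v).
Definition vopp (v : V) : V := vscale (-1) v.
Definition vsub (u v : V) : V := vadd u (vopp v).

Infix "+v" := vadd (at level 50, left associativity).
Infix "-v" := vsub (at level 50, left associativity).
Infix "*v" := vscale (at level 40, left associativity).

Definition dot (u v : V) : Z :=
  c0 u * c1 v + c1 u * c0 v
  - (c2 u * c2 v + c3 u * c3 v + c4 u * c4 v + c5 u * c5 v
     + c6 u * c6 v + c7 u * c7 v + c8 u * c8 v + c9 u * c9 v).

Definition eH1 : V := mkV 1 0 0 0 0 0 0 0 0 0.
Definition eH2 : V := mkV 0 1 0 0 0 0 0 0 0 0.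
Definition bit (i k : nat) : Z := if Nat.eqb i k then 1 else 0.
(* eE i = i-th exceptional class, 1 <= i <= 8 *)
Definition eE (i : nat) : V :=
  mkV 0 0 (bit i 1) (bit i 2) (bit i 3) (bit i 4)
      (bit i 5) (bit i 6) (bit i 7) (bit i 8).

Definition linmap (a0 a1 a2 a3 a4 a5 a6 a7 a8 a9 : V) (v : V) : V :=
  c0 v *v a0 +v c1 v *v a1 +v c2 v *v a2 +v c3 v *v a3 +v c4 v *v a4
  +v c5 v *v a5 +v c6 v *v a6 +v c7 v *v a7 +v c8 v *v a8 +v c9 v *v a9.

Definition refl (r : V) (C : V) : V := C +v (dot C r) *v r.

Definition Hx : V := eH1.
Definition Hy : V := eH2.
Definition F (i : nat) : V := eE i.

Definition KX : V :=
  vopp ((2 *v Hx) +v (2 *v Hy) -v F 1 -v F 2 -v F 3 -v F 4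
        -v F 5 -v F 6 -v F 7 -v F 8).

Definition deltaX (i : nat) : V :=
  match i with
  | 0%nat => Hx -v F 1 -v F 2
  | 1%nat => Hx -v F 3 -v F 4
  | 2%nat => Hy -v F 5 -v F 6
  | 3%nat => F 6 -v F 7
  | 4%nat => F 5 -v F 6
  | _ => F 7 -v F 8
  end.

(* phi_* : Pic(X_n) -> Pic(X_{n+1}) (both written in the basis H_x,H_y,F_i) *)
Definition phiX : V -> V :=
  linmap
    ((5 *v Hx) +v (2 *v Hy) -v F 1 -v F 2 -v F 3 -v F 4
       -v 2 *v F 5 -v 2 *v F 6 -v 2 *v F 7 -v 2 *v F 8)
    ((2 *v Hx) +v Hy -v F 5 -v F 6 -v F 7 -v F 8)
    ((2 *v Hx) +v Hy -v F 2 -v F 5 -v F 6 -v F 7 -v F 8)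
    ((2 *v Hx) +v Hy -v F 1 -v F 5 -v F 6 -v F 7 -v F 8)
    ((2 *v Hx) +v Hy -v F 4 -v F 5 -v F 6 -v F 7 -v F 8)
    ((2 *v Hx) +v Hy -v F 3 -v F 5 -v F 6 -v F 7 -v F 8)
    (Hx -v F 8)
    (Hx -v F 7)
    (Hx -v F 6)
    (Hx -v F 5).

Definition Hf : V := eH1.
Definition Hg : V := eH2.
Definition E (i : nat) : V := eE i.

Definition deltaStd (i : nat) : V :=
  match i with
  | 0%nat => E 1 -v E 2
  | 1%nat => E 3 -v E 4
  | 2%nat => Hf -v E 1 -v E 3
  | 3%nat => Hg -v E 5 -v E 7
  | 4%nat => E 5 -v E 6
  | _ => E 7 -v E 8
  end.

Definition alphaStd (j : nat) : V :=
  match j with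
  | 0%nat => Hg -v E 1 -v E 2
  | 1%nat => Hf -v E 5 -v E 6
  | 2%nat => Hg -v E 3 -v E 4
  | _ => Hf -v E 7 -v E 8
  end.

Definition deltaS : V :=
  alphaStd 0 +v alphaStd 1 +v alphaStd 2 +v alphaStd 3.

Definition w (j : nat) : V -> V := refl (alphaStd j).
Definition sigma2 (C : V) : V := refl (E 1 -v E 3) (refl (E 2 -v E 4) C).
Definition sigma3 (C : V) : V := refl (E 5 -v E 7) (refl (E 6 -v E 8) C).

Definition phiStd (C : V) : V := sigma3 (sigma2 (w 1 (w 2 (w 0 (w 1 C))))).
Definition tStd (C : V) : V := sigma3 (sigma2 (w 3 (w 1 (w 2 (w 0 C))))).

Definition iota : V -> V :=
  linmap
    ((2 *v Hx) +v Hy -v F 1 -v F 3 -v F 5 -v F 6)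
    Hx
    (Hx -v F 1)
    (F 2)
    (Hx -v F 3)
    (F 4)
    (Hx -v F 6)
    (Hx -v F 5)
    (F 7)
    (F 8).

(* Every map in the statement (the identification iota, phi_*, the reflections
   and the compositions built from them) is Z-linear on Z^10, so each identity
   between two such maps reduces to the ten images of a basis, and each
   remaining claim is an explicit finite computation in the lattice. *)
From Stdlib Require Import ZArith Lia.
Open Scope Z_scope.

Definition linear (f : V -> V) : Prop :=
  (forall u v, f (u +v v) = f u +v f v) /\ (forall a v, f (a *v v) = a *v f v).

Ltac expand_lattice :=
  cbv [linmap dot refl eE eH1 eH2 bit vadd vsub vopp vscale Nat.eqb
       c0 c1 c2 c3 c4 c5 c6 c7 c8 c9].

Lemma linear_id : linear (fun v => v).
Proof. split; reflexivity. Qed.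

Lemma linear_comp (f g : V -> V) : linear f -> linear g -> linear (fun v => g (f v)).
Proof.
  intros [f_add f_scale] [g_add g_scale]; split; intros.
  - now rewrite f_add, g_add.
  - now rewrite f_scale, g_scale.
Qed.

Lemma linear_linmap (a0 a1 a2 a3 a4 a5 a6 a7 a8 a9 : V) :
  linear (linmap a0 a1 a2 a3 a4 a5 a6 a7 a8 a9).
Proof.
  destruct a0, a1, a2, a3, a4, a5, a6, a7, a8, a9.
  split; intros; [destruct u, v | destruct v]; expand_lattice; f_equal; ring.
Qed.

Lemma linear_refl (r : V) : linear (refl r).
Proof. destruct r; split; intros; [destruct u, v | destruct v]; expand_lattice; f_equal; ring. Qed.

Lemma linmap_basis (v : V) :
  v = linmap eH1 eH2 (eE 1) (eE 2) (eE 3) (eE 4) (eE 5) (eE 6) (eE 7) (eE 8) v.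
Proof. destruct v; expand_lattice; f_equal; ring. Qed.

Lemma linear_ext (f g : V -> V) : linear f -> linear g ->
  f eH1 = g eH1 -> f eH2 = g eH2 ->
  f (eE 1) = g (eE 1) -> f (eE 2) = g (eE 2) -> f (eE 3) = g (eE 3) ->
  f (eE 4) = g (eE 4) -> f (eE 5) = g (eE 5) -> f (eE 6) = g (eE 6) ->
  f (eE 7) = g (eE 7) -> f (eE 8) = g (eE 8) ->
  forall v, f v = g v.
Proof.
  intros [f_add f_scale] [g_add g_scale] **.
  rewrite (linmap_basis v); unfold linmap.
  rewrite !f_add, !g_add, !f_scale, !g_scale; congruence.
Qed.

Definition iota_inv : V -> V :=
  linmap Hg (Hf +v (2 *v Hg) -v E 1 -v E 3 -v E 5 -v E 6)
    (Hg -v E 1) (E 2) (Hg -v E 3) (E 4) (Hg -v E 6) (Hg -v E 5) (E 7) (E 8).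

Lemma linear_iota : linear iota.
Proof. apply linear_linmap. Qed.

Lemma linear_iota_inv : linear iota_inv.
Proof. apply linear_linmap. Qed.

Lemma linear_phiX : linear phiX.
Proof. apply linear_linmap. Qed.

Ltac prove_linear :=
  lazymatch goal with
  | |- linear (fun v => v) => exact linear_id
  | |- linear (fun v => ?g (@?f v)) => apply (linear_comp f g); prove_linear
  | |- linear iota => exact linear_iota
  | |- linear iota_inv => exact linear_iota_inv
  | |- linear phiX => exact linear_phiX
  | |- linear (refl _) => apply linear_refl
  | |- linear (w _) => apply linear_refl
  | |- linear ?f => unfold f; prove_linear
  end.

Ltac prove_by_basis f g :=
  apply (linear_ext f g); [prove_linear | prove_linear | (vm_compute; reflexivity) ..].

Lemma dot_iota (u v : V) : dot (iota u) (iota v) = dot u v.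
Proof. destruct u, v; cbv [iota Hx Hy F]; expand_lattice; ring. Qed.

Lemma iotaK (v : V) : iota_inv (iota v) = v.
Proof. prove_by_basis (fun v => iota_inv (iota v)) (fun v : V => v). Qed.

Lemma iota_invK (v : V) : iota (iota_inv v) = v.
Proof. prove_by_basis (fun v => iota (iota_inv v)) (fun v : V => v). Qed.

Lemma iota_deltaStd (i : nat) : (i <= 5)%nat -> iota (deltaStd i) = deltaX i.
Proof.
  intros i_le5.
  do 6 (destruct i as [|i]; [vm_compute; reflexivity |]); lia.
Qed.

Lemma phiX_iota (C : V) : phiX (iota C) = iota (phiStd C).
Proof. prove_by_basis (fun v => phiX (iota v)) (fun v => iota (phiStd v)). Qed.

Lemma phiStd_conj_tStd (C : V) : phiStd C = w 1 (tStd (w 1 C)).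
Proof. prove_by_basis phiStd (fun v => w 1 (tStd (w 1 v))). Qed.

Theorem mainTheorem4 :
  (forall u v : V, dot (iota u) (iota v) = dot u v) /\
  (exists iinv : V -> V,
      (forall v, iota (iinv v) = v) /\ (forall v, iinv (iota v) = v)) /\
  (forall i : nat, (i <= 5)%nat -> iota (deltaStd i) = deltaX i) /\
  iota (alphaStd 0) = F 1 -v F 2 /\
  iota (alphaStd 1) = Hy -v F 1 -v F 3 /\
  iota (alphaStd 2) = F 3 -v F 4 /\
  iota (alphaStd 3) =
    (2 *v Hx) +v Hy -v F 1 -v F 3 -v F 5 -v F 6 -v F 7 -v F 8 /\
  iota deltaS = vopp KX /\
  phiX (iota (alphaStd 0)) = iota (alphaStd 0) /\
  phiX (iota (alphaStd 1)) = iota (alphaStd 1) -v vopp KX /\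
  phiX (iota (alphaStd 2)) = iota (alphaStd 2) /\
  phiX (iota (alphaStd 3)) = iota (alphaStd 3) +v vopp KX /\
  (forall C : V, phiX (iota C) = iota (phiStd C)) /\
  (forall C : V, phiStd C = w 1 (tStd (w 1 C))) /\
  tStd (alphaStd 0) = alphaStd 0 -v deltaS /\
  tStd (alphaStd 1) = alphaStd 1 +v deltaS /\
  tStd (alphaStd 2) = alphaStd 2 -v deltaS /\
  tStd (alphaStd 3) = alphaStd 3 +v deltaS.
Proof.
  split; [exact dot_iota |].
  split; [exists iota_inv; split; [exact iota_invK | exact iotaK] |].
  split; [exact iota_deltaStd |].
  do 9 (split; [vm_compute; reflexivity |]).
  split; [exact phiX_iota |].
  split; [exact phiStd_conj_tStd |].
  repeat split; vm_compute; reflexivity.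
Qed.
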